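(* Let $\phi\in UC(\mathbb{R}^{N+1})$ be almost periodic in the $m$-th variable, for some $m\in\{1,\dots,N+1\}$. Then from any real sequence $(s_n)_{n\in\mathbb{N}}$ one can extract a subsequence $(s_{n_k})_{k\in\mathbb{N}}$ such that, for every choice of $(X_1,\dots,X_{m-1},X_{m+1},\dots,X_{N+1})$, the sequence $\big(\phi(X_1,\dots,X_m+s_{n_k},\dots,X_{N+1})\big)_{k}$ converges uniformly in $X_m\in\mathbb{R}$.
   Context: $UC$ means uniformly continuous. A continuous $g:\mathbb{R}\to\mathbb{R}$ is almost periodic if from every real sequence $(s_n)$ one can extract a subsequence along which $g(\cdot+s_{n_k})$ converges uniformly on $\mathbb{R}$; $\phi$ on $\mathbb{R}^{N+1}$ is almost periodic in the $m$-th variable if for each fixed value of the other variables the function $X_m\mapsto\phi(\dots,X_m,\dots)$ is almost periodic. *)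

From Stdlib Require Import Reals Lra Lia.
From Stdlib Require Fin.
Open Scope R_scope.

Definition Pt (N : nat) := Fin.t (S N) -> R.

Definition close {N : nat} (X Y : Pt N) (d : R) : Prop :=
  forall i, Rabs (X i - Y i) < d.

Definition UC {N : nat} (phi : Pt N -> R) : Prop :=
  forall eps, 0 < eps -> exists delta, 0 < delta /\
    forall X Y, close X Y delta -> Rabs (phi X - phi Y) < eps.

Definition setc {N : nat} (m : Fin.t (S N)) (X : Pt N) (t : R) : Pt N :=
  fun i => if Fin.eq_dec i m then t else X i.

Definition strictly_increasing (f : nat -> nat) : Prop :=
  forall k, (f k < f (S k))%nat.

Definition unif_conv (u : nat -> R -> R) : Prop :=
  exists h : R -> R, forall eps, 0 < eps -> exists K : nat,
    forall k, (K <= k)%nat -> forall x, Rabs (u k x - h x) < eps.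

Definition almost_periodic (g : R -> R) : Prop :=
  continuity g /\
  forall s : nat -> R, exists sub : nat -> nat, strictly_increasing sub /\
    unif_conv (fun k x => g (x + s (sub k))).

Definition ap_in_var {N : nat} (m : Fin.t (S N)) (phi : Pt N -> R) : Prop :=
  forall X : Pt N, almost_periodic (fun t => phi (setc m X t)).

(* Let (e_j) be a countable dense family of points of R^(N+1).  For
   each fixed j, almost periodicity of t |-> phi(..., t, ...) at e_j lets us
   refine any subsequence of (s_n) so that the translates of phi at e_j become
   uniformly Cauchy; a Cantor diagonal extraction gives one subsequence that
   works for all e_j simultaneously.  For an arbitrary point X, uniform
   continuity of phi makes the translates at X uniformly close to those at a
   nearby e_j, so they are uniformly Cauchy too, hence uniformly convergent. *)
From Stdlib Require Import Reals Lra Lia Cantor ZArith ClassicalEpsilon.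
From Stdlib Require Fin.
Open Scope R_scope.

(* A surjection nat -> Q, read in R: n encodes ((b, c), p) and gives (b - c)/(p + 1). *)
Definition rational_enum (n : nat) : R :=
  let (a, p) := Cantor.of_nat n in
  let (b, c) := Cantor.of_nat a in (INR b - INR c) / INR (S p).

Lemma INR_Z_parts (z : Z) : INR (Z.to_nat z) - INR (Z.to_nat (- z)) = IZR z.
Proof.
  destruct z; simpl; [lra | |]; rewrite INR_IPR; unfold IZR; lra.
Qed.

(* The enumerated rationals are dense in R: approximate x by up(x P) / P with 1/P < delta. *)
Lemma rational_enum_dense (x delta : R) :
  0 < delta -> exists n, Rabs (x - rational_enum n) < delta.
Proof.
  intros Hdelta.
  pose proof (Rinv_0_lt_compat _ Hdelta) as Hinv.
  destruct (archimed (/ delta)) as [Hup _].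
  set (p := Z.to_nat (up (/ delta))).
  assert (HP : / delta < INR (S p)).
  { unfold p; destruct (Z_lt_le_dec (up (/ delta)) 0) as [Hneg | Hnonneg].
    - apply IZR_lt in Hneg; lra.
    - rewrite S_INR, INR_IZR_INZ, Z2Nat.id by lia; lra. }
  set (P := INR (S p)) in *.
  assert (HP0 : 0 < P) by lra.
  assert (HPdelta : / P < delta).
  { rewrite <- (Rinv_inv delta); apply Rinv_lt_contravar; [apply Rmult_lt_0_compat|]; lra. }
  destruct (archimed (x * P)) as [Hz1 Hz2].
  set (z := up (x * P)) in *.
  exists (Cantor.to_nat (Cantor.to_nat (Z.to_nat z, Z.to_nat (- z)), p)).
  unfold rational_enum; rewrite !Cantor.cancel_of_to; fold P; rewrite INR_Z_parts.
  assert (Hdiff : x - IZR z / P = - ((IZR z - x * P) * / P)) by (field; lra).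
  pose proof (Rinv_0_lt_compat _ HP0) as HinvP.
  rewrite Hdiff, Rabs_Ropp, Rabs_right.
  - apply Rle_lt_trans with (1 * / P); [apply Rmult_le_compat_r|]; lra.
  - apply Rle_ge, Rmult_le_pos; lra.
Qed.

Definition dense_seq {N : nat} (e : nat -> Pt N) : Prop :=
  forall (X : Pt N) delta, 0 < delta -> exists j, close X (e j) delta.

(* R^(N+1) is separable: by induction on N, pair a rational for the first
   coordinate with a point of the dense sequence of R^N for the others. *)
Lemma dense_seq_exists (N : nat) : exists e : nat -> Pt N, dense_seq e.
Proof.
  induction N as [| N [e He]].
  - exists (fun n _ => rational_enum n).
    intros X delta Hdelta.
    destruct (rational_enum_dense (X Fin.F1) delta Hdelta) as [n Hn].
    exists n; intros i; pattern i; apply Fin.caseS'; [exact Hn |].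
    intros i0; apply (Fin.case0 (fun _ => _) i0).
  - exists (fun n i => Fin.caseS' i (fun _ => R)
                         (rational_enum (fst (Cantor.of_nat n)))
                         (fun i' => e (snd (Cantor.of_nat n)) i')).
    intros X delta Hdelta.
    destruct (rational_enum_dense (X Fin.F1) delta Hdelta) as [a Ha].
    destruct (He (fun i => X (Fin.FS i)) delta Hdelta) as [b Hb].
    exists (Cantor.to_nat (a, b)); intros i.
    rewrite Cantor.cancel_of_to; pattern i; apply Fin.caseS'; cbn; auto.
Qed.

Lemma strictly_increasing_ge (f : nat -> nat) :
  strictly_increasing f -> forall n, (n <= f n)%nat.
Proof. intros Hf n; induction n; [lia |]; specialize (Hf n); lia. Qed.

Lemma strictly_increasing_lt (f : nat -> nat) :
  strictly_increasing f -> forall a b, (a < b)%nat -> (f a < f b)%nat.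
Proof.
  intros Hf a b Hab; induction Hab as [| b _ IH]; [apply Hf |].
  specialize (Hf b); lia.
Qed.

Definition tail_subseq (j : nat) (d S : nat -> nat) : Prop :=
  forall k, (j <= k)%nat -> exists i, (k <= i)%nat /\ d k = S i.

(* The refinements are
   nested: T 0 refines the identity and T (n+1) refines T n; d k := T k k. *)
Lemma diagonal_extraction (P : nat -> (nat -> nat) -> Prop) :
  (forall j sub, exists r, strictly_increasing r /\ P j (fun k => sub (r k))) ->
  exists d, strictly_increasing d /\
    forall j, exists S, P j S /\ tail_subseq j d S.
Proof.
  intros Hrefine.
  set (r := fun j sub =>
              proj1_sig (constructive_indefinite_description _ (Hrefine j sub))).
  assert (Hr : forall j sub,
             strictly_increasing (r j sub) /\ P j (fun k => sub (r j sub k))).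
  { intros j sub; unfold r; destruct constructive_indefinite_description; auto. }
  clearbody r.
  set (T := fix T n := match n with
                       | O => fun k => r O (fun x => x) k
                       | S n' => fun k => T n' (r (S n') (T n') k)
                       end).
  assert (T_incr : forall n, strictly_increasing (T n)).
  { induction n; simpl; intros k.
    - apply (proj1 (Hr O (fun x => x))).
    - apply strictly_increasing_lt; [exact IHn | apply (proj1 (Hr _ _))]. }
  assert (T_prop : forall n, P n (T n)).
  { destruct n; simpl; [apply (proj2 (Hr O (fun x => x))) | apply (proj2 (Hr _ _))]. }
  assert (T_nested : forall j k, (j <= k)%nat ->
            exists g, (forall n, (n <= g n)%nat) /\ forall n, T k n = T j (g n)).
  { intros j k Hjk; induction Hjk as [| k _ [g [Hg_ge Hg_eq]]].
    - exists (fun n => n); auto.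
    - exists (fun n => g (r (S k) (T k) n)); split.
      + intros n.
        pose proof (strictly_increasing_ge _ (proj1 (Hr (S k) (T k))) n).
        specialize (Hg_ge (r (S k) (T k) n)); lia.
      + intros n; apply Hg_eq. }
  exists (fun k => T k k); split.
  - intros k; simpl; apply strictly_increasing_lt; [exact (T_incr k) |].
    pose proof (strictly_increasing_ge _ (proj1 (Hr (S k) (T k))) (S k)); lia.
  - intros j; exists (T j); split; [exact (T_prop j) |].
    intros k Hjk; destruct (T_nested j k Hjk) as [g [Hg_ge Hg_eq]].
    exists (g k); auto.
Qed.

Definition unif_cauchy (u : nat -> R -> R) : Prop :=
  forall eps, 0 < eps -> exists K, forall k l, (K <= k)%nat -> (K <= l)%nat ->
    forall x, Rabs (u k x - u l x) < eps.

Lemma dist_triangle (a b c e1 e2 : R) :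
  Rabs (a - b) < e1 -> Rabs (c - b) < e2 -> Rabs (a - c) < e1 + e2.
Proof. unfold Rabs; repeat destruct Rcase_abs; lra. Qed.

Lemma unif_conv_cauchy (u : nat -> R -> R) : unif_conv u -> unif_cauchy u.
Proof.
  intros [h Hh] eps Heps.
  destruct (Hh (eps / 2)) as [K HK]; [lra |].
  exists K; intros k l Hk Hl x.
  replace eps with (eps / 2 + eps / 2) by field.
  exact (dist_triangle _ _ _ _ _ (HK k Hk x) (HK l Hl x)).
Qed.

Lemma unif_cauchy_conv (u : nat -> R -> R) : unif_cauchy u -> unif_conv u.
Proof.
  intros Hu.
  assert (Hpoint : forall x, Cauchy_crit (fun k => u k x)).
  { intros x eps Heps; destruct (Hu eps Heps) as [K HK].
    exists K; intros n k Hn Hk; apply HK; lia. }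
  exists (fun x => proj1_sig (R_complete _ (Hpoint x))).
  intros eps Heps; destruct (Hu (eps / 2)) as [K HK]; [lra |].
  exists K; intros k Hk x.
  destruct (R_complete _ (Hpoint x)) as [l Hl]; simpl.
  destruct (Hl (eps / 2)) as [K' HK']; [lra |].
  set (n := max K K').
  specialize (HK' n ltac:(lia)); unfold Rdist in HK'.
  specialize (HK k n Hk ltac:(lia) x).
  replace eps with (eps / 2 + eps / 2) by field.
  replace (u k x - l) with ((u k x - u n x) + (u n x - l)) by ring.
  eapply Rle_lt_trans; [apply Rabs_triang | lra].
Qed.

Lemma unif_cauchy_tail_subseq (u : nat -> R -> R) (j : nat) (d S : nat -> nat) :
  unif_cauchy (fun k => u (S k)) -> tail_subseq j d S ->
  unif_cauchy (fun k => u (d k)).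
Proof.
  intros Hu Htail eps Heps; destruct (Hu eps Heps) as [K HK].
  exists (max K j); intros k l Hk Hl x.
  destruct (Htail k ltac:(lia)) as [i [Hi ->]].
  destruct (Htail l ltac:(lia)) as [i' [Hi' ->]].
  apply HK; lia.
Qed.

Lemma unif_cauchy_approx (u : nat -> R -> R) :
  (forall eps, 0 < eps -> exists v, unif_cauchy v /\
     forall k x, Rabs (u k x - v k x) < eps) ->
  unif_cauchy u.
Proof.
  intros Happrox eps Heps.
  destruct (Happrox (eps / 3)) as [v [Hv Huv]]; [lra |].
  destruct (Hv (eps / 3)) as [K HK]; [lra |].
  exists K; intros k l Hk Hl x.
  replace eps with (eps / 3 + eps / 3 + eps / 3) by field.
  apply (dist_triangle _ (v l x)); [| apply Huv].
  replace (u k x - v l x) with ((u k x - v k x) + (v k x - v l x)) by ring.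
  eapply Rle_lt_trans; [apply Rabs_triang |].
  pose proof (Huv k x); pose proof (HK k l Hk Hl x); lra.
Qed.

Lemma setc_close {N : nat} (m : Fin.t (S N)) (X Y : Pt N) (t delta : R) :
  0 < delta -> close X Y delta -> close (setc m X t) (setc m Y t) delta.
Proof.
  intros Hdelta Hclose i; unfold setc; destruct (Fin.eq_dec i m); [| apply Hclose].
  rewrite Rminus_eq_0, Rabs_R0; exact Hdelta.
Qed.

Theorem mainTheorem10 (N : nat) (m : Fin.t (S N)) (phi : Pt N -> R) :
  UC phi -> ap_in_var m phi ->
  forall s : nat -> R, exists sub : nat -> nat, strictly_increasing sub /\
    forall X : Pt N, unif_conv (fun k t => phi (setc m X (t + s (sub k)))).
Proof.
  intros Huc Hap s.
  destruct (dense_seq_exists N) as [e He].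
  set (translates := fun (X : Pt N) (n : nat) (t : R) => phi (setc m X (t + s n))).
  assert (Hrefine : forall j sub, exists r, strictly_increasing r /\
            unif_cauchy (fun k => translates (e j) (sub (r k)))).
  { intros j sub.
    destruct (proj2 (Hap (e j)) (fun n => s (sub n))) as [r [Hr Hconv]].
    exists r; split; [exact Hr | exact (unif_conv_cauchy _ Hconv)]. }
  destruct (diagonal_extraction
              (fun j S => unif_cauchy (fun k => translates (e j) (S k))) Hrefine)
    as [d [Hd Hdiag]].
  exists d; split; [exact Hd |].
  intros X; apply unif_cauchy_conv, unif_cauchy_approx.
  (* Approximate the translates at X by those at a nearby point e j. *)
  intros eps Heps; destruct (Huc eps Heps) as [delta [Hdelta Hphi]].
  destruct (He X delta Hdelta) as [j Hj].
  destruct (Hdiag j) as [S [HS Htail]].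
  exists (fun k => translates (e j) (d k)); split.
  - exact (unif_cauchy_tail_subseq (translates (e j)) j d S HS Htail).
  - intros k t; apply Hphi, setc_close; assumption.
Qed.
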